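(* For each integer $n \ge 0$ let $L_n(x)$ denote the $n$-th Laguerre polynomial, $L_n(x) = \sum_{k=0}^{n} (-1)^k \binom{n}{k} \frac{x^k}{k!}$. Let $T$ be the linear transformation on the real vector space $\mathbb{R}[x]$ of real polynomials defined by $T(x^n) = L_n(x)$ for all $n \ge 0$, extended linearly. Then $T$ preserves real-rootedness: if $f \in \mathbb{R}[x]$ has all of its roots real, then $T(f)$ has all of its roots real.
   Context: A real polynomial is said to have all real roots (to be real-rooted) if every one of its complex roots is real. A linear transformation on polynomials preserves real-rootedness if it maps every polynomial with all real roots to a polynomial with all real roots. *)

From HB Require Import structures.
From mathcomp Require Import all_boot all_order all_algebra.
From mathcomp Require Import reals.
From mathcomp.real_closed Require Import complex.
Set Implicit Arguments. Unset Strict Implicit. Unset Printing Implicit Defensive.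
Import Order.TTheory GRing.Theory Num.Theory.
Local Open Scope ring_scope.

Definition laguerre (R : realType) (n : nat) : {poly R} :=
  \poly_(k < n.+1) ((-1) ^+ k * 'C(n, k)%:R / (k`!)%:R).

Definition laguerreT (R : realType) (f : {poly R}) : {poly R} :=
  \sum_(i < size f) f`_i *: laguerre R i.

Definition real_rooted (R : realType) (f : {poly R}) : Prop :=
  forall z : R[i], root (map_poly (real_complex R) f) z -> complex.Im z = 0.

From HB Require Import structures.
From mathcomp Require Import all_boot all_order all_algebra.
From mathcomp Require Import reals.
From mathcomp.real_closed Require Import complex.
From mathcomp Require Import ring.
Set Implicit Arguments. Unset Strict Implicit. Unset Printing Implicit Defensive.
Import Order.TTheory GRing.Theory Num.Theory.
Local Open Scope ring_scope.

(* With n = deg f and r(X) = X^n f(1 - 1/X), the operator r(D) = sum_j r_j D^j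
   sends X^n to n! T(f), since ((X - 1)^i)(D) X^i = i! L_i. If f is real-rooted
   then so is r (its roots are the 1/(1 - a), a a root of f), and r(0) = +-lead f
   is nonzero, so r factors over C into real nonzero linear factors X - w.
   Each D - w preserves real-rootedness: for P with real roots,
   Im (P'(z)/P(z)) = - sum_r Im z / |z - r|^2 has the sign opposite to Im z,
   so P'(z) = w P(z) is impossible off the real axis. *)

Section DiffOp.
Variable K : nzRingType.
Implicit Types r h : {poly K}.

Definition diffop r h : {poly K} := \sum_(j < size h) r`_j *: h^`(j).

Lemma diffop_widen r h m : (size h <= m)%N ->
  diffop r h = \sum_(j < m) r`_j *: h^`(j).
Proof.
move=> hm; rewrite /diffop (big_ord_widen m (fun j => r`_j *: h^`(j)) hm).
rewrite big_mkcond; apply: eq_bigr => j _; case: ifP => // /negbT.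
by rewrite -leqNgt => hj; rewrite derivn_poly0 ?scaler0.
Qed.

Lemma diffopD p q h : diffop (p + q) h = diffop p h + diffop q h.
Proof. by rewrite -big_split; apply: eq_bigr => j _; rewrite coefD scalerDl. Qed.

Lemma diffopB p q h : diffop (p - q) h = diffop p h - diffop q h.
Proof. by rewrite -sumrB; apply: eq_bigr => j _; rewrite coefB scalerBl. Qed.

Lemma diffopZl a r h : diffop (a *: r) h = a *: diffop r h.
Proof. by rewrite scaler_sumr; apply: eq_bigr => j _; rewrite coefZ scalerA. Qed.

Lemma diffop_sum (I : Type) (s : seq I) (P : pred I) (q : I -> {poly K}) h :
  diffop (\sum_(i <- s | P i) q i) h = \sum_(i <- s | P i) diffop (q i) h.
Proof.
elim/big_rec2: _ => [|i x y _ <-]; last by rewrite diffopD.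
by rewrite /diffop big1 // => j _; rewrite coef0 scale0r.
Qed.

Lemma diffopC c h : diffop c%:P h = c *: h.
Proof.
rewrite (diffop_widen _ (leqnSn (size h))) big_ord_recl coefC /= big1 ?addr0 //.
by move=> j _; rewrite coefC scale0r.
Qed.

Lemma diffop_mulX r h : diffop (r * 'X) h = (diffop r h)^`().
Proof.
rewrite (diffop_widen _ (leqnSn (size h))) big_ord_recl coefMX /= scale0r add0r.
by rewrite raddf_sum /=; apply: eq_bigr => j _; rewrite coefMX derivZ.
Qed.

Lemma diffop_deriv r h : diffop r h^`() = (diffop r h)^`().
Proof.
have size_deriv_le : (size h^`() <= size h)%N.
  by have [->|/lt_size_deriv/ltnW] := eqVneq h 0; rewrite ?deriv0.
rewrite (diffop_widen _ size_deriv_le) raddf_sum /=; apply: eq_bigr => j _.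
by rewrite derivZ -derivSn derivnS.
Qed.

Lemma diffop_mulXn r h k : diffop (r * 'X^k) h = diffop r h^`(k).
Proof.
elim: k => [|k IH]; first by rewrite mulr1 derivn0.
by rewrite exprSr mulrA diffop_mulX IH -diffop_deriv derivnS.
Qed.

Lemma diffop_Xn k h : diffop 'X^k h = h^`(k).
Proof. by rewrite -[X in diffop X _]mul1r diffop_mulXn -polyC1 diffopC scale1r. Qed.

End DiffOp.

Lemma map_diffop (K L : nzRingType) (m : {rmorphism K -> L}) (r h : {poly K}) :
  injective m -> map_poly m (diffop r h) = diffop (map_poly m r) (map_poly m h).
Proof.
move=> m_inj; rewrite /diffop size_map_inj_poly ?rmorph0 // rmorph_sum.
by apply: eq_bigr => j _ /=; rewrite map_polyZ coef_map derivn_map.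
Qed.

Lemma diffop_XsubC (K : comNzRingType) (r h : {poly K}) (w : K) :
  diffop (r * ('X - w%:P)) h = (diffop r h)^`() - w *: diffop r h.
Proof. by rewrite mulrBr [r * w%:P]mulrC mul_polyC diffopB diffopZl diffop_mulX. Qed.

Lemma diffopZr (K : comNzRingType) (r h : {poly K}) (a : K) :
  diffop r (a *: h) = a *: diffop r h.
Proof.
rewrite (diffop_widen r (size_scale_leq a h)) scaler_sumr.
by apply: eq_bigr => j _; rewrite derivnZ !scalerA mulrC.
Qed.

Section RealRootedComplex.
Variable R : realType.
Local Notation C := R[i].
Local Notation Re := (@complex.Re R).
Local Notation Im := (@complex.Im R).

Definition real_rootedC (p : {poly C}) : Prop := forall z, root p z -> Im z = 0.

Definition im_mul_conj (u v : C) : R := Im (u * v^*%C).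

Lemma sqr_Re_add_sqr_Im_gt0 (q : C) : q != 0 -> 0 < Re q ^+ 2 + Im q ^+ 2.
Proof.
case: q => a b q_neq0 /=.
rewrite lt_neqAle addr_ge0 ?sqr_ge0 // andbT eq_sym paddr_eq0 ?sqr_ge0 //.
by rewrite !sqrf_eq0; apply: contra q_neq0 => /andP[/eqP-> /eqP->].
Qed.

Lemma im_mul_conj_real_mull (w p : C) : Im w = 0 -> im_mul_conj (w * p) p = 0.
Proof. by case: w p => a b [c d] /= ->; rewrite /im_mul_conj /=; ring. Qed.

Lemma im_mul_conj_deriv_XsubC (r q q' z : C) : Im r = 0 ->
  im_mul_conj (q + (z - r) * q') ((z - r) * q) * Im z =
  - (Im z ^+ 2 * (Re q ^+ 2 + Im q ^+ 2))
  + ((Re z - Re r) ^+ 2 + Im z ^+ 2) * (im_mul_conj q' q * Im z).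
Proof.
by case: r z q q' => r1 r2 [x y] [c d] [a b] /= ->; rewrite /im_mul_conj /=; ring.
Qed.

Lemma horner_prod_XsubC_neq0 (rs : seq C) (z : C) :
  {in rs, forall r, Im r = 0} -> Im z != 0 -> (\prod_(r <- rs) ('X - r%:P)).[z] != 0.
Proof.
move=> rs_real z_nreal; apply: contra z_nreal => Pz0.
by apply/eqP/rs_real; rewrite -root_prod_XsubC; exact: Pz0.
Qed.

Lemma im_mul_conj_deriv_prod_XsubC_le0 (rs : seq C) (z : C) :
  {in rs, forall r, Im r = 0} ->
  let P := \prod_(r <- rs) ('X - r%:P) in im_mul_conj P^`().[z] P.[z] * Im z <= 0.
Proof.
elim: rs => [|r rs IH] rs_real /=.
  by rewrite big_nil derivC horner0 /im_mul_conj mul0r mul0r.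
have r_real : Im r = 0 by apply: rs_real; rewrite mem_head.
have /IH {}IH : {in rs, forall w, Im w = 0}.
  by move=> w w_in; apply: rs_real; rewrite inE w_in orbT.
rewrite big_cons derivM derivXsubC mul1r !hornerE im_mul_conj_deriv_XsubC //.
apply: ler_wnDr; first by rewrite mulr_ge0_le0 ?addr_ge0 ?sqr_ge0.
by rewrite oppr_le0 mulr_ge0 ?addr_ge0 ?sqr_ge0.
Qed.

Lemma im_mul_conj_deriv_prod_XsubC_lt0 (r : C) (rs : seq C) (z : C) :
  {in r :: rs, forall w, Im w = 0} -> Im z != 0 ->
  let P := \prod_(w <- r :: rs) ('X - w%:P) in im_mul_conj P^`().[z] P.[z] * Im z < 0.
Proof.
move=> rs_real z_nreal /=.
have r_real : Im r = 0 by apply: rs_real; rewrite mem_head.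
have rs'_real : {in rs, forall w, Im w = 0}.
  by move=> w w_in; apply: rs_real; rewrite inE w_in orbT.
rewrite big_cons derivM derivXsubC mul1r !hornerE im_mul_conj_deriv_XsubC //.
apply: ltr_wnDr.
  by rewrite mulr_ge0_le0 ?addr_ge0 ?sqr_ge0 //; exact: im_mul_conj_deriv_prod_XsubC_le0.
rewrite oppr_lt0 mulr_gt0 ?sqr_Re_add_sqr_Im_gt0 ?horner_prod_XsubC_neq0 //.
by rewrite lt_neqAle sqr_ge0 andbT eq_sym sqrf_eq0.
Qed.

Lemma real_rootedC_deriv_subZ (g : {poly C}) (w : C) :
  real_rootedC g -> Im w = 0 -> w != 0 -> real_rootedC (g^`() - w *: g).
Proof.
move=> g_real w_real w_neq0 z; rewrite rootE !hornerE subr_eq0 => /eqP g'z.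
apply/eqP; apply: contraT => z_nreal.
have g_neq0 : g != 0.
  by apply: contraNneq z_nreal => g0; apply/eqP/g_real; rewrite g0 root0.
have [rs g_eq] := closed_field_poly_normal g.
have c_neq0 : lead_coef g != 0 by rewrite lead_coef_eq0.
have rs_real : {in rs, forall r, Im r = 0}.
  by move=> r r_in; apply: g_real; rewrite g_eq rootZ // root_prod_XsubC.
have P'z : (\prod_(r <- rs) ('X - r%:P))^`().[z] = w * (\prod_(r <- rs) ('X - r%:P)).[z].
  apply: (mulfI c_neq0); rewrite mulrCA -!hornerZ -derivZ -g_eq.
  by rewrite g'z hornerZ.
case: rs g_eq rs_real P'z => [|r rs] _ rs_real P'z.
  move: P'z; rewrite big_nil derivC horner0 hornerC mulr1 => w0.
  by rewrite -w0 eqxx in w_neq0.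
have := im_mul_conj_deriv_prod_XsubC_lt0 rs_real z_nreal.
by rewrite /= P'z im_mul_conj_real_mull // mul0r ltxx.
Qed.

Lemma real_rootedC_diffop_prod_XsubC (ws : seq C) (h : {poly C}) :
  {in ws, forall w, Im w = 0} -> 0 \notin ws -> real_rootedC h ->
  real_rootedC (diffop (\prod_(w <- ws) ('X - w%:P)) h).
Proof.
move=> + + h_real; elim: ws => [|w ws IH] ws_real ws_neq0.
  by rewrite big_nil -polyC1 diffopC scale1r.
move: ws_neq0; rewrite inE negb_or eq_sym => /andP[w_neq0 ws_neq0].
rewrite big_cons mulrC diffop_XsubC; apply: real_rootedC_deriv_subZ => //.
  by apply: IH => // v v_in; apply: ws_real; rewrite inE v_in orbT.
by apply: ws_real; rewrite mem_head.
Qed.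

Lemma real_rootedC_diffop (r h : {poly C}) :
  r.[0] != 0 -> real_rootedC r -> real_rootedC h -> real_rootedC (diffop r h).
Proof.
move=> r0_neq0 r_real h_real.
have r_neq0 : r != 0 by apply: contraNneq r0_neq0 => ->; rewrite horner0.
have [ws r_eq] := closed_field_poly_normal r.
have ws_real : {in ws, forall w, Im w = 0}.
  by move=> w w_in; apply: r_real; rewrite r_eq rootZ ?lead_coef_eq0 // root_prod_XsubC.
have ws_neq0 : 0 \notin ws.
  by rewrite -root_prod_XsubC -(rootZ _ _ (_ : lead_coef r != 0)) ?lead_coef_eq0 // -r_eq.
move=> z; rewrite r_eq diffopZl rootZ ?lead_coef_eq0 //.
exact: real_rootedC_diffop_prod_XsubC.
Qed.

End RealRootedComplex.

(* X^n f(1 - 1/X), where n = deg f. *)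
Definition laguerre_symbol (K : comNzRingType) (f : {poly K}) : {poly K} :=
  \sum_(i < size f) f`_i *: ('X^((size f).-1 - i) * ('X - 1) ^+ i).

Lemma map_laguerre_symbol (F : fieldType) (L : comNzRingType) (m : {rmorphism F -> L})
    (f : {poly F}) :
  map_poly m (laguerre_symbol f) = laguerre_symbol (map_poly m f).
Proof.
rewrite /laguerre_symbol size_map_poly rmorph_sum; apply: eq_bigr => i _ /=.
by rewrite map_polyZ coef_map rmorphM !rmorphXn rmorphB /= map_polyX rmorph1.
Qed.

Lemma horner0_laguerre_symbol (K : comNzRingType) (f : {poly K}) :
  (laguerre_symbol f).[0] = (-1) ^+ (size f).-1 * lead_coef f.
Proof.
have [->|f_neq0] := eqVneq f 0.
  by rewrite /laguerre_symbol size_poly0 big_ord0 horner0 lead_coef0 mulr0.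
rewrite /laguerre_symbol horner_sum (polySpred f_neq0) big_ord_recr /= big1 ?add0r.
  by rewrite hornerZ hornerM subnn horner_exp !hornerE /= expr0 mulr1 mulrC lead_coefE.
move=> i _; rewrite hornerZ hornerM hornerXn expr0n.
by rewrite subn_eq0 leqNgt ltn_ord mul0r mulr0.
Qed.

Lemma horner_laguerre_symbol (F : fieldType) (f : {poly F}) (z : F) : z != 0 ->
  (laguerre_symbol f).[z] = z ^+ (size f).-1 * f.[1 - z^-1].
Proof.
move=> z_neq0; rewrite /laguerre_symbol horner_sum horner_coef mulr_sumr.
apply: eq_bigr => i _.
have i_le : (i <= (size f).-1)%N by rewrite -ltnS (ltn_predK (ltn_ord i)).
rewrite hornerZ hornerM hornerXn horner_exp !hornerE /=.
have -> : z - 1 = z * (1 - z^-1) by rewrite mulrBr mulr1 mulfV.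
by rewrite -[in RHS](subnK i_le) exprD exprMn; ring.
Qed.

Section LaguerreOperator.
Variable R : realType.
Local Notation rc := (real_complex R).

Lemma diffop_XsubC1_expn_Xn (i : nat) :
  diffop (('X - 1) ^+ i) 'X^i = i`!%:R *: laguerre R i.
Proof.
have -> : ('X - 1 : {poly R}) ^+ i =
    \sum_(k < i.+1) ((-1) ^+ k * 'C(i, k)%:R) *: 'X^(i - k).
  rewrite exprDn; apply: eq_bigr => k _.
  by rewrite -polyCN -mul_polyC rmorphM rmorphXn rmorph_nat -mulr_natr /=; ring.
rewrite diffop_sum /laguerre poly_def scaler_sumr; apply: eq_bigr => k _.
have k_le : (k <= i)%N by rewrite -ltnS.
have k_fact_neq0 : (k`!%:R : R) != 0 by rewrite pnatr_eq0 -lt0n fact_gt0.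
rewrite diffopZl diffop_Xn derivnXn subKn // -scaler_nat !scalerA; congr (_ *: _).
rewrite -(ffact_fact (leq_subr k i)) subKn // natrM; field; exact: k_fact_neq0.
Qed.

Lemma diffop_laguerre_symbol (f : {poly R}) :
  diffop (laguerre_symbol f) 'X^((size f).-1) = ((size f).-1)`!%:R *: laguerreT f.
Proof.
rewrite diffop_sum /laguerreT scaler_sumr; apply: eq_bigr => i _.
have i_le : (i <= (size f).-1)%N by rewrite -ltnS (ltn_predK (ltn_ord i)).
rewrite diffopZl mulrC diffop_mulXn derivnXn subKn // -scaler_nat diffopZr.
have := ffact_fact (leq_subr i (size f).-1); rewrite subKn // => fact_eq.
rewrite diffop_XsubC1_expn_Xn !scalerA -mulrA -natrM fact_eq.
by rewrite mulrC.
Qed.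

Lemma real_rooted_neq0 (f : {poly R}) : real_rooted f -> f != 0.
Proof.
apply: contraPneq => -> /(_ 'i).
by rewrite map_poly0 root0 => /(_ isT) /eqP; rewrite oner_eq0.
Qed.

Lemma real_rootedC_laguerre_symbol (f : {poly R}) :
  real_rooted f -> real_rootedC (laguerre_symbol (map_poly rc f)).
Proof.
move=> f_real z.
have [->|z_neq0] := eqVneq z 0; first by [].
rewrite rootE horner_laguerre_symbol // mulf_eq0 expf_eq0 (negbTE z_neq0) andbF /=.
move=> /f_real; case: z z_neq0 => a b z_neq0 /=.
have := sqr_Re_add_sqr_Im_gt0 z_neq0; rewrite /= => norm_gt0.
by rewrite sub0r opprK => /eqP; rewrite mulf_eq0 invr_eq0 (gt_eqF norm_gt0) orbF => /eqP.
Qed.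

End LaguerreOperator.

Theorem mainTheorem1 (R : realType) (f : {poly R}) :
  real_rooted f -> real_rooted (laguerreT f).
Proof.
move=> f_real.
have f_neq0 := real_rooted_neq0 f_real.
have nfact_neq0 : (((size f).-1)`!%:R : R[i]) != 0 by rewrite pnatr_eq0 -lt0n fact_gt0.
move=> z; rewrite -(rootZ _ _ nfact_neq0) -(rmorph_nat (real_complex R)) -map_polyZ.
rewrite -diffop_laguerre_symbol map_diffop; last exact: complexI.
rewrite map_polyXn map_laguerre_symbol.
apply: real_rootedC_diffop.
- by rewrite horner0_laguerre_symbol mulf_neq0 ?signr_eq0 // lead_coef_eq0 map_poly_eq0.
- by move=> w /(real_rootedC_laguerre_symbol f_real).
- by move=> w; rewrite rootE hornerXn expf_eq0 => /andP[_ /eqP ->].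
Qed.
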